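(* Fix $n\ge2$, $1\le m\le n-1$. For every $\sigma\ge0$ and every eigenfunction $u_m(\cdot;\sigma)$ for $\lambda_m(\sigma)$, and every $1\le k\le n$, $$F_{k,m}(\sigma)=n\pi(-1)^{k+1}\,\frac{u_m(x_k;\sigma)+u_m(x_{k-1};\sigma)}{n^2\pi^2-\lambda_m(\sigma)}.$$ In particular, $F_{1,m}(\sigma)\neq0$, and if for each $\sigma\ge 0$ the eigenfunction $u_m(\cdot;\sigma)$ is normalized so that $F_{1,m}(\sigma)=1$, then for each $1\le k\le n$ the quantity $F_{k,m}(\sigma)$ is independent of $\sigma\in[0,\infty)$.
   Context: Fix an integer $n\ge2$. Set $x_k=k/n$ for $0\le k\le n$ and $I_k=[x_{k-1},x_k]$ for $1\le k\le n$. For $\sigma\ge 0$, the spectral flow problem is the eigenvalue problem of finding $\lambda\in\mathbb{R}$ and a nonzero continuous function $u:[0,1]\to\mathbb{R}$, smooth on each open interval $(x_{k-1},x_k)$, such that $-u''=\lambda u$ on each $(x_{k-1},x_k)$, $u(0)=u(1)=0$, and for each $1\le k\le n-1$: $u$ is continuous at $x_k$ and $u'(x_k^+)-u'(x_k^-)=\sigma\,u(x_k)$, where $\pm$ denote right/left one-sided limits. For each $\sigma\ge0$ the eigenvalues are real, positive and simple, and are listed increasingly as $\lambda_1(\sigma)<\lambda_2(\sigma)<\cdots$; at $\sigma=0$, $\lambda_m(0)=m^2\pi^2$ with eigenfunction $\sin(m\pi x)$. We write $u_m(x;\sigma)$ for an eigenfunction associated with $\lambda_m(\sigma)$. Define $F_{k,m}(\sigma)=\int_{I_k}u_m(x;\sigma)\sin(n\pi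 x)\,dx$. *)

From Stdlib Require Import Reals Lra List.
From Coquelicot Require Import Coquelicot.
Open Scope R_scope.

Definition xk (n k : nat) : R := INR k / INR n.

Definition cont_on_01 (u : R -> R) : Prop :=
  forall x, 0 <= x <= 1 ->
    filterlim u (within (fun y => 0 <= y <= 1) (locally x)) (locally (u x)).

Definition is_eigenfunction (n : nat) (sigma lam : R) (u : R -> R) : Prop :=
  (exists x, 0 <= x <= 1 /\ u x <> 0) /\
  cont_on_01 u /\
  (forall k : nat, (1 <= k <= n)%nat ->
     forall x, xk n (k - 1) < x < xk n k ->
       (forall j : nat, ex_derive_n u j x) /\
       - Derive_n u 2 x = lam * u x) /\
  u 0 = 0 /\ u 1 = 0 /\
  (* delta-interaction jump conditions at interior grid points *)
  (forall k : nat, (1 <= k <= n - 1)%nat ->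
     exists dl dr : R,
       filterlim (Derive u) (at_left (xk n k)) (locally dl) /\
       filterlim (Derive u) (at_right (xk n k)) (locally dr) /\
       dr - dl = sigma * u (xk n k)).

Definition is_eigenvalue (n : nat) (sigma lam : R) : Prop :=
  exists u, is_eigenfunction n sigma lam u.

Definition is_mth_eigenvalue (n : nat) (sigma : R) (m : nat) (lam : R) : Prop :=
  is_eigenvalue n sigma lam /\
  exists l : list R, NoDup l /\ length l = (m - 1)%nat /\
    forall mu, In mu l <-> (is_eigenvalue n sigma mu /\ mu < lam).

Definition Fk (n k : nat) (u : R -> R) : R :=
  RInt (fun x => u x * sin (INR n * PI * x)) (xk n (k - 1)) (xk n k).

(* Let h = 1/n.  On each cell the equation -u'' = λu forces
     u(x) = u(x_{k-1}) C_λ(x - x_{k-1}) + β S_λ(x - x_{k-1}),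
   where C_λ, S_λ are the fundamental solutions (C_λ(0)=1, S_λ'(0)=1).
   Continuity and the jump condition u'(x_k+) - u'(x_k-) = σu(x_k) then give
   the three-term recurrence u(x_{k+1}) = 2c u(x_k) - u(x_{k-1}) with
   c = C_λ(h) + σS_λ(h)/2, so u(x_k) = u(x_1) U_{k-1}(c) (Chebyshev).

   1. Integrating u(x) sin(nπx) over a cell explicitly (λ > 0, λ ≠ n²π²)
      gives the formula for F_k in terms of the node values.
   2. Spectral characterization: below the threshold n²π², an eigenvalue
      has u(x_1) ≠ 0, U_{n-1}(c) = 0, hence λ > 0 and c = cos(jπ/n) with
      1 ≤ j ≤ n-1; conversely, for each such j an eigenfunction is built
      (intermediate value theorem plus explicit gluing of sine waves), and
      c strictly decreases in λ on (0, n²π²).  Counting eigenvalues shows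
      that λ_m(σ) < n²π² and c = cos(mπ/n).
   3. Hence F_1 = nπ u(x_1)/(n²π² - λ) ≠ 0, and F_k/F_1 is the σ-independent
      quantity (-1)^{k+1} (U_{k-1} + U_{k-2})(cos(mπ/n)). *)
From Stdlib Require Import Reals Lra List Lia ZArith.
From Coquelicot Require Import Coquelicot.
Open Scope R_scope.

(** * Fundamental solutions of -y'' = λy *)

(* C_λ and S_λ solve y'' = -λy with (C_λ, C_λ')(0) = (1,0), (S_λ, S_λ')(0) = (0,1),
   written out according to the sign of λ. *)
Definition Cfun (lam t : R) : R :=
  if Rlt_dec 0 lam then cos (sqrt lam * t)
  else if Rlt_dec lam 0 then cosh (sqrt (- lam) * t) else 1.
Definition Sfun (lam t : R) : R :=
  if Rlt_dec 0 lam then sin (sqrt lam * t) / sqrt lam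
  else if Rlt_dec lam 0 then sinh (sqrt (- lam) * t) / sqrt (- lam) else t.

Lemma exp_mul_exp_opp a : exp a * exp (- a) = 1.
Proof. rewrite <- exp_plus. replace (a + - a) with 0 by ring. apply exp_0. Qed.

Lemma Cfun_derive lam t : is_derive (Cfun lam) t (- lam * Sfun lam t).
Proof.
  unfold Cfun, Sfun; destruct (Rlt_dec 0 lam) as [Hp|Hp].
  - assert (Hs : 0 < sqrt lam) by (apply sqrt_lt_R0; lra).
    auto_derive; auto.
    replace lam with (sqrt lam * sqrt lam) at 3 by (apply sqrt_sqrt; lra).
    field. lra.
  - destruct (Rlt_dec lam 0) as [Hn|Hn].
    + assert (Hs : 0 < sqrt (- lam)) by (apply sqrt_lt_R0; lra).
      unfold cosh, sinh. auto_derive; auto.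
      set (mu := sqrt (- lam)) in *.
      assert (Hm : - lam = mu * mu) by (unfold mu; rewrite sqrt_sqrt; lra).
      rewrite Hm. field. lra.
    + replace lam with 0 by lra. auto_derive; auto. ring.
Qed.

Lemma Sfun_derive lam t : is_derive (Sfun lam) t (Cfun lam t).
Proof.
  unfold Cfun, Sfun; destruct (Rlt_dec 0 lam) as [Hp|Hp].
  - assert (Hs : 0 < sqrt lam) by (apply sqrt_lt_R0; lra).
    auto_derive; auto. field. lra.
  - destruct (Rlt_dec lam 0) as [Hn|Hn].
    + assert (Hs : 0 < sqrt (- lam)) by (apply sqrt_lt_R0; lra).
      unfold cosh, sinh. auto_derive; auto. field. lra.
    + auto_derive; auto.
Qed.

Lemma fund_energy lam t : Cfun lam t ^ 2 + lam * Sfun lam t ^ 2 = 1.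
Proof.
  unfold Cfun, Sfun; destruct (Rlt_dec 0 lam) as [Hp|Hp].
  - assert (Hs : 0 < sqrt lam) by (apply sqrt_lt_R0; lra).
    set (mu := sqrt lam) in *.
    assert (Hm : lam = mu * mu) by (unfold mu; rewrite sqrt_sqrt; lra).
    rewrite Hm. pose proof (sin2_cos2 (mu * t)). unfold Rsqr in *.
    field_simplify; [|lra]. nra.
  - destruct (Rlt_dec lam 0) as [Hn|Hn].
    + assert (Hs : 0 < sqrt (- lam)) by (apply sqrt_lt_R0; lra).
      set (mu := sqrt (- lam)) in *.
      assert (Hm : lam = - (mu * mu)) by (unfold mu; rewrite sqrt_sqrt; lra).
      rewrite Hm. unfold cosh, sinh. pose proof (exp_mul_exp_opp (mu * t)) as He.
      field_simplify; [|lra]. rewrite (Rmult_assoc 16), He. field. lra.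
    + replace lam with 0 by lra. ring.
Qed.

Lemma fund_init lam : Cfun lam 0 = 1 /\ Sfun lam 0 = 0.
Proof.
  unfold Cfun, Sfun; destruct (Rlt_dec 0 lam) as [Hp|Hp].
  - rewrite Rmult_0_r, cos_0, sin_0. split; [reflexivity | unfold Rdiv; ring].
  - destruct (Rlt_dec lam 0) as [Hn|Hn]; [|split; reflexivity].
    unfold cosh, sinh. rewrite Rmult_0_r, Ropp_0, exp_0.
    split; [field | unfold Rdiv; ring].
Qed.

Lemma fund_nonpos lam t : lam <= 0 -> 0 <= t -> 1 <= Cfun lam t /\ 0 <= Sfun lam t.
Proof.
  intros Hl Ht. unfold Cfun, Sfun; destruct (Rlt_dec 0 lam) as [Hp|Hp]; [lra|].
  destruct (Rlt_dec lam 0) as [Hn|Hn]; [|lra].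
  assert (Hs : 0 < sqrt (- lam)) by (apply sqrt_lt_R0; lra).
  set (a := sqrt (- lam) * t).
  assert (Hle : exp (- a) <= exp a).
  { destruct (Req_dec t 0) as [E|E].
    - unfold a. rewrite E, Rmult_0_r, Ropp_0. lra.
    - left. apply exp_increasing. unfold a. nra. }
  pose proof (exp_mul_exp_opp a). pose proof (exp_pos a). pose proof (exp_pos (- a)).
  unfold cosh, sinh. split; [nra | apply Rdiv_le_0_compat; lra].
Qed.

Lemma Sfun_pos lam t : 0 < t -> lam * t ^ 2 < PI ^ 2 -> 0 < Sfun lam t.
Proof.
  intros Ht Hl. unfold Sfun; destruct (Rlt_dec 0 lam) as [Hp|Hp].
  - assert (Hs : 0 < sqrt lam) by (apply sqrt_lt_R0; lra).
    apply Rdiv_lt_0_compat; auto. apply sin_gt_0; [nra|].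
    pose proof PI_RGT_0.
    assert ((sqrt lam * t) ^ 2 < PI ^ 2).
    { replace ((sqrt lam * t) ^ 2) with (sqrt lam * sqrt lam * t ^ 2) by ring.
      rewrite sqrt_sqrt; lra. }
    nra.
  - destruct (Rlt_dec lam 0) as [Hn|Hn]; [|lra].
    assert (Hs : 0 < sqrt (- lam)) by (apply sqrt_lt_R0; lra).
    apply Rdiv_lt_0_compat; auto. unfold sinh.
    assert (exp (- (sqrt (- lam) * t)) < exp (sqrt (- lam) * t)) by (apply exp_increasing; nra).
    lra.
Qed.

(** * Solutions of -u'' = λu on an open interval *)

Lemma derive_Rmult f g x df dg : is_derive f x df -> is_derive g x dg ->
  is_derive (fun y => f y * g y) x (df * g x + f x * dg).
Proof.
  intros H1 H2. apply is_derive_Reals. apply is_derive_Reals in H1, H2.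
  exact (derivable_pt_lim_mult f g x df dg H1 H2).
Qed.

Lemma derive_Rplus f g x df dg : is_derive f x df -> is_derive g x dg ->
  is_derive (fun y => f y + g y) x (df + dg).
Proof.
  intros H1 H2. apply is_derive_Reals. apply is_derive_Reals in H1, H2.
  exact (derivable_pt_lim_plus f g x df dg H1 H2).
Qed.

Lemma derive_Rminus f g x df dg : is_derive f x df -> is_derive g x dg ->
  is_derive (fun y => f y - g y) x (df - dg).
Proof.
  intros H1 H2. apply is_derive_Reals. apply is_derive_Reals in H1, H2.
  exact (derivable_pt_lim_minus f g x df dg H1 H2).
Qed.

Lemma derive_shift (f : R -> R) a x d :
  is_derive f (x - a) d -> is_derive (fun y => f (y - a)) x d.
Proof.
  intros H. apply is_derive_Reals. apply is_derive_Reals in H.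
  replace d with (d * 1) by ring.
  apply (derivable_pt_lim_comp (fun y => y - a) f x 1 d); auto.
  replace 1 with (1 - 0) by ring.
  apply derivable_pt_lim_minus; [apply derivable_pt_lim_id | apply derivable_pt_lim_const].
Qed.

Lemma shifted_Cfun_derive lam a x :
  is_derive (fun y => Cfun lam (y - a)) x (- lam * Sfun lam (x - a)).
Proof. apply derive_shift, Cfun_derive. Qed.

Lemma shifted_Sfun_derive lam a x :
  is_derive (fun y => Sfun lam (y - a)) x (Cfun lam (x - a)).
Proof. apply derive_shift, Sfun_derive. Qed.

Lemma const_of_zero_derive (f : R -> R) a b :
  (forall x, a < x < b -> is_derive f x 0) ->
  forall x y, a < x < b -> a < y < b -> f x = f y.
Proof.
  intros Hd.
  assert (Hle : forall x y, a < x < b -> a < y < b -> x <= y -> f x = f y).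
  { intros x y Hx Hy Hxy.
    destruct (MVT_gen f x y (fun _ => 0)) as [c [_ Hc]].
    - intros z Hz. apply Hd. unfold Rmin, Rmax in Hz. destruct (Rle_dec x y); lra.
    - intros z Hz. apply continuity_pt_filterlim.
      apply (ex_derive_continuous (V := R_NormedModule)). eexists. apply Hd.
      unfold Rmin, Rmax in Hz. destruct (Rle_dec x y); lra.
    - lra. }
  intros x y Hx Hy. destruct (Rle_dec x y); [auto | symmetry; apply Hle; auto; lra].
Qed.

(* Every solution of -u'' = λu on (a,b) is a combination of C_λ(·-a), S_λ(·-a):
   the coefficients are the "energy" pairings of (u,u') with (C_λ,S_λ), which
   are constant along the interval. *)
Lemma ode_general_solution (u : R -> R) lam a b :
  (forall x, a < x < b -> ex_derive u x /\ ex_derive (Derive u) x /\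
     - Derive (Derive u) x = lam * u x) ->
  a < b ->
  exists al be, forall x, a < x < b ->
     u x = al * Cfun lam (x - a) + be * Sfun lam (x - a) /\
     Derive u x = - lam * al * Sfun lam (x - a) + be * Cfun lam (x - a).
Proof.
  intros Hu Hab.
  set (fa := fun x => u x * Cfun lam (x - a) - Derive u x * Sfun lam (x - a)).
  set (fb := fun x => lam * (u x * Sfun lam (x - a)) + Derive u x * Cfun lam (x - a)).
  assert (Da : forall x, a < x < b -> is_derive fa x 0).
  { intros x Hx. destruct (Hu x Hx) as [H1 [H2 H3]].
    apply Derive_correct in H1. apply Derive_correct in H2.
    evar (d : R). replace 0 with d.
    - apply derive_Rminus; apply derive_Rmult;
        eauto using shifted_Cfun_derive, shifted_Sfun_derive.
    - unfold d. nra. }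
  assert (Db : forall x, a < x < b -> is_derive fb x 0).
  { intros x Hx. destruct (Hu x Hx) as [H1 [H2 H3]].
    apply Derive_correct in H1. apply Derive_correct in H2.
    evar (d : R). replace 0 with d.
    - apply derive_Rplus; [apply is_derive_scal|]; apply derive_Rmult;
        eauto using shifted_Cfun_derive, shifted_Sfun_derive.
    - unfold d. nra. }
  set (mid := (a + b) / 2).
  exists (fa mid), (fb mid). intros x Hx.
  rewrite (const_of_zero_derive fa a b Da mid x) by (unfold mid; lra).
  rewrite (const_of_zero_derive fb a b Db mid x) by (unfold mid; lra).
  unfold fa, fb. pose proof (fund_energy lam (x - a)) as HI.
  split; [rewrite <- (Rmult_1_r (u x)) at 1 | rewrite <- (Rmult_1_r (Derive u x)) at 1];
    rewrite <- HI; ring.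
Qed.


Lemma limit_right_agrees (f g : R -> R) a b L : a < b ->
  (forall x, a < x < b -> f x = g x) -> continuous g a ->
  filterlim f (at_right a) (locally L) -> L = g a.
Proof.
  intros Hab Hfg Hg Hf.
  apply (filterlim_locally_unique (F := at_right a) f); [exact Hf|].
  apply (filterlim_ext_loc g).
  - exists (mkposreal _ (proj2 (Rlt_0_minus _ _) Hab)). intros y Hy Hay.
    apply Rabs_lt_between' in Hy. simpl in Hy. symmetry. apply Hfg. lra.
  - eapply filterlim_filter_le_1; [apply filter_le_within | exact Hg].
Qed.

Lemma limit_left_agrees (f g : R -> R) a b L : a < b ->
  (forall x, a < x < b -> f x = g x) -> continuous g b ->
  filterlim f (at_left b) (locally L) -> L = g b.
Proof.
  intros Hab Hfg Hg Hf.
  apply (filterlim_locally_unique (F := at_left b) f); [exact Hf|].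
  apply (filterlim_ext_loc g).
  - exists (mkposreal _ (proj2 (Rlt_0_minus _ _) Hab)). intros y Hy Hyb.
    apply Rabs_lt_between' in Hy. simpl in Hy. symmetry. apply Hfg. lra.
  - eapply filterlim_filter_le_1; [apply filter_le_within | exact Hg].
Qed.

Lemma cont_on_01_at_right u a b : 0 <= a -> a < b -> b <= 1 -> cont_on_01 u ->
  filterlim u (at_right a) (locally (u a)).
Proof.
  intros Ha Hab Hb Hu. eapply filterlim_filter_le_1; [|apply Hu; lra].
  intros P [d Hd].
  assert (Hm : 0 < Rmin d (b - a)) by (apply Rmin_glb_lt; [apply cond_pos | lra]).
  exists (mkposreal _ Hm). intros y Hy Hay. apply Hd.
  - eapply ball_le; [apply Rmin_l | exact Hy].
  - apply Rabs_lt_between' in Hy. pose proof (Rmin_r d (b - a)). simpl in Hy. lra.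
Qed.

Lemma cont_on_01_at_left u a b : 0 <= a -> a < b -> b <= 1 -> cont_on_01 u ->
  filterlim u (at_left b) (locally (u b)).
Proof.
  intros Ha Hab Hb Hu. eapply filterlim_filter_le_1; [|apply Hu; lra].
  intros P [d Hd].
  assert (Hm : 0 < Rmin d (b - a)) by (apply Rmin_glb_lt; [apply cond_pos | lra]).
  exists (mkposreal _ Hm). intros y Hy Hyb. apply Hd.
  - eapply ball_le; [apply Rmin_l | exact Hy].
  - apply Rabs_lt_between' in Hy. pose proof (Rmin_r d (b - a)). simpl in Hy. lra.
Qed.

Definition mesh (n : nat) : R := 1 / INR n.

Lemma mesh_pos n : (0 < n)%nat -> 0 < mesh n.
Proof. intros Hn. unfold mesh. apply Rdiv_lt_0_compat; [lra | apply lt_0_INR; auto]. Qed.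

Lemma xk_0 n : xk n 0 = 0.
Proof. unfold xk. simpl. unfold Rdiv. ring. Qed.

Lemma xk_n n : (0 < n)%nat -> xk n n = 1.
Proof. intros Hn. unfold xk. pose proof (lt_0_INR n Hn). field. lra. Qed.

Lemma xk_step n k : (0 < n)%nat -> (1 <= k)%nat -> xk n k - xk n (k - 1) = mesh n.
Proof.
  intros Hn Hk. unfold xk, mesh. rewrite minus_INR by lia. simpl.
  pose proof (lt_0_INR n Hn). field. lra.
Qed.

Lemma xk_step_succ n k : (0 < n)%nat -> xk n (S k) - xk n k = mesh n.
Proof.
  intros Hn. pose proof (xk_step n (S k) Hn ltac:(lia)) as H.
  replace (S k - 1)%nat with k in H by lia. exact H.
Qed.

Lemma xk_lt n k : (0 < n)%nat -> (1 <= k)%nat -> xk n (k - 1) < xk n k.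
Proof. intros Hn Hk. pose proof (xk_step n k Hn Hk). pose proof (mesh_pos n Hn). lra. Qed.

Lemma xk_bounds n k : (0 < n)%nat -> (k <= n)%nat -> 0 <= xk n k <= 1.
Proof.
  intros Hn Hk. unfold xk. pose proof (lt_0_INR n Hn). pose proof (le_INR _ _ Hk).
  pose proof (pos_INR k). split.
  - apply Rdiv_le_0_compat; lra.
  - apply Rmult_le_reg_r with (INR n); auto. field_simplify; lra.
Qed.

Lemma grid_cover n x : (0 < n)%nat -> 0 <= x <= 1 ->
  exists k, (1 <= k <= n)%nat /\ xk n (k - 1) <= x <= xk n k.
Proof.
  intros Hn Hx.
  assert (G : forall j, (1 <= j <= n)%nat -> x <= xk n j ->
            exists k, (1 <= k <= j)%nat /\ xk n (k - 1) <= x <= xk n k).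
  { induction j as [|j IH]; intros Hj Hxj; [lia|].
    destruct (Nat.eq_dec j 0) as [E|E].
    - subst. exists 1%nat. split; [lia|]. simpl. rewrite xk_0. lra.
    - destruct (Rle_dec x (xk n j)) as [L|L].
      + destruct (IH ltac:(lia) L) as [k [Hk1 Hk2]]. exists k. split; [lia | auto].
      + exists (S j). split; [lia|]. replace (S j - 1)%nat with j by lia. lra. }
  destruct (G n ltac:(lia) ltac:(rewrite (xk_n n Hn); lra)) as [k Hk].
  exists k. split; [lia | tauto].
Qed.

(** * Eigenfunctions: cell form and node recurrence *)

Lemma eigenfunction_cell_form n sigma lam u k : (0 < n)%nat ->
  is_eigenfunction n sigma lam u -> (1 <= k <= n)%nat ->
  exists be,
   (forall x, xk n (k - 1) < x < xk n k ->
     u x = u (xk n (k - 1)) * Cfun lam (x - xk n (k - 1))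
           + be * Sfun lam (x - xk n (k - 1)) /\
     Derive u x = - lam * u (xk n (k - 1)) * Sfun lam (x - xk n (k - 1))
                  + be * Cfun lam (x - xk n (k - 1))) /\
   u (xk n k) = u (xk n (k - 1)) * Cfun lam (mesh n) + be * Sfun lam (mesh n).
Proof.
  intros Hn [_ [Hc [Hd _]]] Hk.
  set (a := xk n (k - 1)). set (b := xk n k).
  assert (Hab : a < b) by (apply xk_lt; lia).
  assert (Ha0 : 0 <= a) by (apply xk_bounds; lia).
  assert (Hb1 : b <= 1) by (apply xk_bounds; lia).
  destruct (ode_general_solution u lam a b) as [al [be Hr]]; auto.
  { intros x Hx. destruct (Hd k Hk x Hx) as [Hx1 Hx2].
    exact (conj (Hx1 1%nat) (conj (Hx1 2%nat) Hx2)). }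
  set (g := fun x => al * Cfun lam (x - a) + be * Sfun lam (x - a)).
  assert (Hg : forall p, continuous g p).
  { intro p. apply (ex_derive_continuous (V := R_NormedModule)). eexists.
    apply derive_Rplus; apply is_derive_scal;
      [apply shifted_Cfun_derive | apply shifted_Sfun_derive]. }
  assert (Hug : forall x, a < x < b -> u x = g x) by (intros x Hx; apply Hr, Hx).
  assert (Ea : u a = g a)
    by exact (limit_right_agrees u g a b (u a) Hab Hug (Hg a)
                (cont_on_01_at_right u a b Ha0 Hab Hb1 Hc)).
  assert (Eb : u b = g b)
    by exact (limit_left_agrees u g a b (u b) Hab Hug (Hg b)
                (cont_on_01_at_left u a b Ha0 Hab Hb1 Hc)).
  unfold g in Ea, Eb. rewrite Rminus_diag in Ea.
  destruct (fund_init lam) as [C0 S0]. rewrite C0, S0 in Ea.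
  replace al with (u a) in Hr by lra.
  exists be. split; [exact Hr|]. rewrite Eb, Ea.
  unfold b, a. rewrite xk_step by lia. ring.
Qed.

(* Half the trace of the transfer matrix across one node and one cell. *)
Definition half_trace n sigma lam := Cfun lam (mesh n) + sigma * Sfun lam (mesh n) / 2.

Lemma cell_derivative_continuous lam a al be p :
  continuous (fun x => - lam * al * Sfun lam (x - a) + be * Cfun lam (x - a)) p.
Proof.
  apply (ex_derive_continuous (V := R_NormedModule)). eexists.
  apply derive_Rplus; apply is_derive_scal;
    [apply shifted_Sfun_derive | apply shifted_Cfun_derive].
Qed.

(* The jump condition at x_k turns the two cell forms into the three-term
   recurrence for the node values. *)
Lemma node_recurrence n sigma lam u k : (0 < n)%nat -> is_eigenfunction n sigma lam u ->
  (1 <= k <= n - 1)%nat ->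
  u (xk n (S k)) = 2 * half_trace n sigma lam * u (xk n k) - u (xk n (k - 1)).
Proof.
  intros Hn He Hk.
  destruct (eigenfunction_cell_form n sigma lam u k Hn He ltac:(lia)) as [b1 [R1 E1]].
  destruct (eigenfunction_cell_form n sigma lam u (S k) Hn He ltac:(lia)) as [b2 [R2 E2]].
  replace (S k - 1)%nat with k in R2, E2 by lia.
  destruct He as [_ [_ [_ [_ [_ Hjump]]]]].
  destruct (Hjump k Hk) as [dl [dr [Hl [Hr Hdiff]]]].
  pose proof (limit_left_agrees (Derive u) _ _ _ dl (xk_lt n k Hn ltac:(lia))
                (fun x Hx => proj2 (R1 x Hx)) (cell_derivative_continuous _ _ _ _ _) Hl) as Edl.
  assert (Hk2 : xk n k < xk n (S k)) by (pose proof (xk_step_succ n k Hn); pose proof (mesh_pos n Hn); lra).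
  pose proof (limit_right_agrees (Derive u) _ _ _ dr Hk2 (fun x Hx => proj2 (R2 x Hx))
                (cell_derivative_continuous _ _ _ _ _) Hr) as Edr.
  cbv beta in Edl, Edr. rewrite xk_step in Edl by lia. rewrite Rminus_diag in Edr.
  destruct (fund_init lam) as [C0 S0]. rewrite C0, S0 in Edr.
  pose proof (fund_energy lam (mesh n)) as HI.
  unfold half_trace. rewrite E2, E1.
  set (Cv := Cfun lam (mesh n)) in *. set (Sv := Sfun lam (mesh n)) in *.
  set (U0 := u (xk n (k - 1))) in *.
  replace b2 with (dl + sigma * (U0 * Cv + b1 * Sv)) by (rewrite <- E1; lra).
  rewrite Edl.
  transitivity (2 * (Cv + sigma * Sv / 2) * (U0 * Cv + b1 * Sv)
                - U0 * (Cv ^ 2 + lam * Sv ^ 2)); [field | rewrite HI; field].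
Qed.

(** * Chebyshev polynomials of the second kind *)

(* cheb c k = U_{k-1}(c): cheb c 0 = 0, cheb c 1 = 1, cheb c (k+2) = 2c cheb c (k+1) - cheb c k. *)
Fixpoint cheb (c : R) (k : nat) : R :=
  match k with
  | O => 0
  | S O => 1
  | S ((S k'') as k') => 2 * c * cheb c k' - cheb c k''
  end.

Lemma recurrence_cheb (U : nat -> R) c n : U 0%nat = 0 ->
  (forall k, (1 <= k <= n - 1)%nat -> U (S k) = 2 * c * U k - U (k - 1)%nat) ->
  forall k, (k <= n)%nat -> U k = U 1%nat * cheb c k.
Proof.
  intros H0 Hr.
  assert (G : forall k, (S k <= n)%nat ->
            U k = U 1%nat * cheb c k /\ U (S k) = U 1%nat * cheb c (S k)).
  { induction k as [|k IH]; intros Hk.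
    - simpl. rewrite H0. split; ring.
    - destruct (IH ltac:(lia)) as [A1 A2]. split; auto.
      rewrite Hr by lia. replace (S k - 1)%nat with k by lia.
      rewrite A1, A2. simpl cheb at 3. destruct k; simpl; ring. }
  intros k Hk. destruct k; [simpl; rewrite H0; ring | apply (G k Hk)].
Qed.

(* For c ≥ 1 the sequence grows at least linearly, so it has no zero k ≥ 1. *)
Lemma cheb_ge_index c : 1 <= c -> forall k, INR k <= cheb c k.
Proof.
  intros Hc.
  assert (G : forall k, INR k <= cheb c k /\ cheb c (S k) - cheb c k >= 1).
  { induction k as [|k [I1 I2]]; [simpl; lra|].
    split; [rewrite S_INR; lra|].
    change (cheb c (S (S k))) with (2 * c * cheb c (S k) - cheb c k).
    assert (0 <= cheb c (S k)) by (pose proof (pos_INR k); lra). nra. }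
  intro k; apply G.
Qed.

Lemma cheb_sin t k : cheb (cos t) k * sin t = sin (INR k * t).
Proof.
  revert k.
  assert (G : forall k, cheb (cos t) k * sin t = sin (INR k * t) /\
                        cheb (cos t) (S k) * sin t = sin (INR (S k) * t)).
  { induction k as [|k [I1 I2]].
    - change (INR 0) with 0. change (INR 1) with 1. simpl cheb.
      rewrite !Rmult_0_l, !Rmult_1_l, sin_0. split; reflexivity.
    - split; auto.
      change (cheb (cos t) (S (S k))) with (2 * cos t * cheb (cos t) (S k) - cheb (cos t) k).
      replace (INR (S (S k)) * t) with (INR (S k) * t + t) by (rewrite !S_INR; ring).
      replace (INR k * t) with (INR (S k) * t - t) in I1 by (rewrite S_INR; ring).
      rewrite sin_minus in I1. rewrite sin_plus.
      replace ((2 * cos t * cheb (cos t) (S k) - cheb (cos t) k) * sin t) with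
        (2 * cos t * (cheb (cos t) (S k) * sin t) - cheb (cos t) k * sin t) by ring.
      rewrite I1, I2. ring. }
  intro k; apply G.
Qed.


(** * Eigenvalues below the threshold n²π² *)

Lemma below_threshold n lam : (0 < n)%nat -> lam < INR n ^ 2 * PI ^ 2 ->
  lam * mesh n ^ 2 < PI ^ 2.
Proof.
  intros Hn Hl. pose proof (lt_0_INR n Hn). unfold mesh.
  replace (lam * (1 / INR n) ^ 2) with (lam / INR n ^ 2) by (field; lra).
  apply Rmult_lt_reg_r with (INR n ^ 2); [nra|].
  field_simplify; lra.
Qed.

Lemma Cfun_gt_m1 lam t : 0 <= t -> lam * t ^ 2 < PI ^ 2 -> -1 < Cfun lam t.
Proof.
  intros Ht Hl. destruct (Rle_dec lam 0) as [Hn|Hp].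
  - pose proof (fund_nonpos lam t Hn Ht). lra.
  - unfold Cfun. destruct (Rlt_dec 0 lam) as [_|]; [|lra].
    assert (Hs : 0 < sqrt lam) by (apply sqrt_lt_R0; lra).
    pose proof PI_RGT_0.
    assert ((sqrt lam * t) ^ 2 < PI ^ 2).
    { replace ((sqrt lam * t) ^ 2) with (sqrt lam * sqrt lam * t ^ 2) by ring.
      rewrite sqrt_sqrt; lra. }
    rewrite <- cos_PI. apply cos_decreasing_1; nra.
Qed.

(* Below the threshold a cell carries no nonzero solution vanishing at both
   ends, so an eigenfunction cannot vanish at every node. *)
Lemma eigenfunction_nonzero_at_nodes n sigma lam u : (0 < n)%nat ->
  is_eigenfunction n sigma lam u -> lam < INR n ^ 2 * PI ^ 2 ->
  ~ (forall k, (k <= n)%nat -> u (xk n k) = 0).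
Proof.
  intros Hn He Hl Z. pose proof He as [[x [Hx Hux]] _]. apply Hux.
  destruct (grid_cover n x Hn Hx) as [k [Hk Hxk]].
  destruct (Req_dec x (xk n (k - 1))) as [E1|E1]; [rewrite E1; apply Z; lia|].
  destruct (Req_dec x (xk n k)) as [E2|E2]; [rewrite E2; apply Z; lia|].
  destruct (eigenfunction_cell_form n sigma lam u k Hn He Hk) as [be [Hform Hend]].
  rewrite (Z (k - 1)%nat) in Hform, Hend by lia. rewrite (Z k) in Hend by lia.
  assert (0 < Sfun lam (mesh n))
    by (apply Sfun_pos; [apply mesh_pos | apply below_threshold]; auto).
  assert (be = 0) by nra. subst be.
  rewrite (proj1 (Hform x ltac:(lra))). ring.
Qed.

Lemma eigen_node_values n sigma lam u : (0 < n)%nat -> is_eigenfunction n sigma lam u ->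
  lam < INR n ^ 2 * PI ^ 2 ->
  u (xk n 1) <> 0 /\ cheb (half_trace n sigma lam) n = 0 /\
  forall k, (k <= n)%nat -> u (xk n k) = u (xk n 1) * cheb (half_trace n sigma lam) k.
Proof.
  intros Hn He Hl.
  assert (Hnodes : forall k, (k <= n)%nat ->
            u (xk n k) = u (xk n 1) * cheb (half_trace n sigma lam) k).
  { apply (recurrence_cheb (fun k => u (xk n k))).
    - simpl. rewrite xk_0. apply He.
    - intros k Hk. apply (node_recurrence n sigma lam u k Hn He Hk). }
  assert (U1 : u (xk n 1) <> 0).
  { intro Z. apply (eigenfunction_nonzero_at_nodes n sigma lam u Hn He Hl).
    intros k Hk. rewrite Hnodes, Z by auto. ring. }
  repeat split; auto.
  assert (Un : u (xk n n) = 0) by (rewrite xk_n by auto; apply He).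
  rewrite Hnodes in Un by auto.
  destruct (Rmult_integral _ _ Un); [contradiction | auto].
Qed.

Lemma cheb_zero_cos n c : (0 < n)%nat -> -1 < c < 1 -> cheb c n = 0 ->
  exists j, (1 <= j <= n - 1)%nat /\ c = cos (INR j * PI / INR n).
Proof.
  intros Hn Hc Hz.
  set (th := acos c).
  assert (Ct : cos th = c) by (apply cos_acos; lra).
  pose proof (acos_bound c) as Bt. fold th in Bt.
  assert (th <> 0) by (intro E; rewrite E, cos_0 in Ct; lra).
  assert (th <> PI) by (intro E; rewrite E, cos_PI in Ct; lra).
  assert (Sth : 0 < sin th) by (apply sin_gt_0; lra).
  pose proof (cheb_sin th n) as PS. rewrite Ct, Hz, Rmult_0_l in PS.
  symmetry in PS. apply sin_eq_0_0 in PS. destruct PS as [z Hzth].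
  pose proof (lt_0_INR n Hn). pose proof PI_RGT_0.
  assert (Z1 : 0 < IZR z) by (assert (0 < IZR z * PI) by (rewrite <- Hzth; nra); nra).
  assert (Z2 : IZR z < INR n)
    by (assert (IZR z * PI < INR n * PI) by (rewrite <- Hzth; nra); nra).
  apply lt_IZR in Z1. rewrite INR_IZR_INZ in Z2. apply lt_IZR in Z2.
  exists (Z.to_nat z). split; [lia|].
  rewrite INR_IZR_INZ, Z2Nat.id by lia. rewrite <- Hzth, <- Ct. f_equal. field. lra.
Qed.

Lemma eigen_below_threshold n sigma lam u : (0 < n)%nat -> 0 <= sigma ->
  is_eigenfunction n sigma lam u -> lam < INR n ^ 2 * PI ^ 2 ->
  0 < lam /\ exists j, (1 <= j <= n - 1)%nat /\ half_trace n sigma lam = cos (INR j * PI / INR n).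
Proof.
  intros Hn Hs He Hl.
  destruct (eigen_node_values n sigma lam u Hn He Hl) as [_ [Hz _]].
  pose proof (mesh_pos n Hn) as Hh.
  pose proof (below_threshold n lam Hn Hl) as Hsmall.
  assert (Hlt1 : half_trace n sigma lam < 1).
  { destruct (Rlt_dec (half_trace n sigma lam) 1) as [L|L]; auto. exfalso.
    pose proof (cheb_ge_index (half_trace n sigma lam) ltac:(lra) n) as Hge. rewrite Hz in Hge.
    pose proof (lt_0_INR n Hn). lra. }
  assert (Hpos : 0 < lam).
  { destruct (Rlt_dec 0 lam) as [L|L]; auto. exfalso.
    destruct (fund_nonpos lam (mesh n) ltac:(lra) ltac:(lra)).
    unfold half_trace in Hlt1. nra. }
  split; auto.
  apply cheb_zero_cos; auto. split; auto.
  pose proof (Cfun_gt_m1 lam (mesh n) ltac:(lra) Hsmall).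
  assert (0 < Sfun lam (mesh n)) by (apply Sfun_pos; auto).
  unfold half_trace. nra.
Qed.


(** * The half-trace as a function of the frequency √λ *)

Definition half_trace_freq n sigma w := cos (w * mesh n) + sigma * (sin (w * mesh n) / w) / 2.

Lemma half_trace_sqrt n sigma lam : 0 < lam ->
  half_trace n sigma lam = half_trace_freq n sigma (sqrt lam).
Proof.
  intros H. unfold half_trace, half_trace_freq, Cfun, Sfun.
  destruct (Rlt_dec 0 lam); [reflexivity | lra].
Qed.

Lemma continuity_of_derive (f : R -> R) x d : is_derive f x d -> continuity_pt f x.
Proof.
  intros H. apply continuity_pt_filterlim.
  apply (ex_derive_continuous (V := R_NormedModule)). exists d; auto.
Qed.

Lemma tcos_le_sin t : 0 <= t <= PI -> t * cos t <= sin t.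
Proof.
  intros Ht. destruct (Req_dec t 0) as [E|E]; [subst; rewrite sin_0; lra|].
  destruct (MVT_gen (fun t => sin t - t * cos t) 0 t (fun t => t * sin t))
    as [c [Hc Hm]].
  - intros x _. auto_derive; auto. ring.
  - intros x _. apply (continuity_of_derive _ _ (x * sin x)). auto_derive; auto. ring.
  - rewrite Rmin_left, Rmax_right in Hc by lra.
    rewrite sin_0, Rmult_0_l, !Rminus_0_r in Hm.
    assert (0 <= sin c) by (apply sin_ge_0; lra).
    assert (0 <= c * sin c * t) by (apply Rmult_le_pos; [apply Rmult_le_pos|]; lra). lra.
Qed.

Lemma sinc_decreasing t1 t2 : 0 < t1 -> t1 <= t2 -> t2 <= PI -> sin t2 / t2 <= sin t1 / t1.
Proof.
  intros H1 H12 H2.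
  destruct (MVT_gen (fun t => sin t / t) t1 t2 (fun t => (t * cos t - sin t) / t ^ 2))
    as [c [Hc Hm]].
  - intros x Hx. rewrite Rmin_left, Rmax_right in Hx by lra.
    auto_derive; [lra | field; lra].
  - intros x Hx. rewrite Rmin_left, Rmax_right in Hx by lra.
    apply (continuity_of_derive _ _ ((x * cos x - sin x) / x ^ 2)).
    auto_derive; [lra | field; lra].
  - rewrite Rmin_left, Rmax_right in Hc by lra.
    pose proof (tcos_le_sin c ltac:(lra)).
    assert ((c * cos c - sin c) / c ^ 2 <= 0).
    { replace ((c * cos c - sin c) / c ^ 2) with (- ((sin c - c * cos c) / c ^ 2))
        by (field; lra).
      assert (0 <= (sin c - c * cos c) / c ^ 2) by (apply Rdiv_le_0_compat; nra). lra. }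
    assert ((c * cos c - sin c) / c ^ 2 * (t2 - t1) <= 0) by nra. lra.
Qed.

Lemma half_trace_freq_decreasing n sigma w1 w2 : (0 < n)%nat -> 0 <= sigma ->
  0 < w1 -> w1 < w2 -> w2 * mesh n <= PI ->
  half_trace_freq n sigma w2 < half_trace_freq n sigma w1.
Proof.
  intros Hn Hs H1 H12 H2. pose proof (mesh_pos n Hn) as Hh.
  unfold half_trace_freq.
  assert (cos (w2 * mesh n) < cos (w1 * mesh n)) by (apply cos_decreasing_1; nra).
  assert (E : forall w, 0 < w ->
            sin (w * mesh n) / w = mesh n * (sin (w * mesh n) / (w * mesh n)))
    by (intros w Hw; field; split; lra).
  rewrite (E w1), (E w2) by lra.
  pose proof (sinc_decreasing (w1 * mesh n) (w2 * mesh n) ltac:(nra) ltac:(nra) H2).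
  assert (mesh n * (sin (w2 * mesh n) / (w2 * mesh n))
          <= mesh n * (sin (w1 * mesh n) / (w1 * mesh n))) by nra.
  nra.
Qed.

Lemma half_trace_decreasing n sigma m1 m2 : (0 < n)%nat -> 0 <= sigma ->
  0 < m1 -> m1 < m2 -> m2 < INR n ^ 2 * PI ^ 2 ->
  half_trace n sigma m2 < half_trace n sigma m1.
Proof.
  intros Hn Hs H1 H12 H2. rewrite !half_trace_sqrt by lra.
  apply half_trace_freq_decreasing; auto;
    [apply sqrt_lt_R0; lra | apply sqrt_lt_1; lra |].
  pose proof (below_threshold n m2 Hn H2). pose proof (mesh_pos n Hn). pose proof PI_RGT_0.
  assert (0 < sqrt m2) by (apply sqrt_lt_R0; lra).
  assert ((sqrt m2 * mesh n) ^ 2 < PI ^ 2).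
  { replace ((sqrt m2 * mesh n) ^ 2) with (sqrt m2 * sqrt m2 * mesh n ^ 2) by ring.
    rewrite sqrt_sqrt; lra. }
  nra.
Qed.

Lemma index_angle_range n j : (0 < n)%nat -> (1 <= j <= n - 1)%nat ->
  0 < INR j * PI / INR n < PI.
Proof.
  intros Hn Hj. pose proof (lt_0_INR n Hn). pose proof PI_RGT_0.
  assert (1 <= INR j) by (apply (le_INR 1); lia).
  assert (INR j <= INR n - 1)
    by (replace 1 with (INR 1) by reflexivity; rewrite <- minus_INR by lia; apply le_INR; lia).
  split; [apply Rdiv_lt_0_compat; nra|].
  apply Rmult_lt_reg_r with (INR n); auto. field_simplify; nra.
Qed.

Lemma half_trace_freq_hits n sigma j : (0 < n)%nat -> 0 <= sigma -> (1 <= j <= n - 1)%nat ->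
  exists w, 0 < w /\ w * mesh n < PI /\ half_trace_freq n sigma w = cos (INR j * PI / INR n).
Proof.
  intros Hn Hs Hj.
  pose proof (mesh_pos n Hn) as Hh. pose proof PI_RGT_0.
  set (th := INR j * PI / INR n).
  assert (Hth : 0 < th < PI) by (apply index_angle_range; auto).
  set (w0 := th / 2 / mesh n). set (wm := PI / mesh n).
  assert (Ew0 : w0 * mesh n = th / 2) by (unfold w0; field; lra).
  assert (Ewm : wm * mesh n = PI) by (unfold wm; field; lra).
  assert (Hw0 : 0 < w0) by (unfold w0; apply Rdiv_lt_0_compat; lra).
  assert (Hw0m : w0 < wm) by (apply Rmult_lt_reg_r with (mesh n); auto; lra).
  assert (Hend : half_trace_freq n sigma wm < cos th).
  { unfold half_trace_freq. rewrite Ewm, sin_PI, cos_PI.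
    assert (cos PI < cos th) by (apply cos_decreasing_1; lra).
    rewrite cos_PI in *. unfold Rdiv. lra. }
  destruct (Ranalysis5.IVT_interv (fun w => cos th - half_trace_freq n sigma w) w0 wm)
    as [z [Hz Hfz]].
  - intros a Ha. apply (continuity_of_derive _ _ (- (- (mesh n) * sin (a * mesh n) +
        sigma * ((mesh n * cos (a * mesh n) * a - sin (a * mesh n)) / a ^ 2) / 2))).
    unfold half_trace_freq. auto_derive; [lra | field; lra].
  - exact Hw0m.
  - unfold half_trace_freq. rewrite Ew0.
    assert (cos th < cos (th / 2)) by (apply cos_decreasing_1; lra).
    assert (0 <= sin (th / 2)) by (apply sin_ge_0; lra).
    assert (0 <= sin (th / 2) / w0) by (apply Rdiv_le_0_compat; lra).
    nra.
  - lra.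
  - exists z. split; [lra|]. split; [|lra].
    destruct (Req_dec z wm) as [E|E]; [subst z; lra|].
    assert (z < wm) by lra. nra.
Qed.


(** * Existence: an eigenfunction for each index j *)

Definition wave (w a A B x : R) := A * cos (w * (x - a)) + B * sin (w * (x - a)).

Lemma wave_derive w a A B x : is_derive (wave w a A B) x (wave w a (w * B) (- w * A) x).
Proof. unfold wave. auto_derive; auto. unfold Rminus; ring. Qed.

Fixpoint wave_coef (w : R) (j : nat) (A B : R) : R * R :=
  match j with
  | O => (A, B)
  | S j => let p := wave_coef w j A B in (w * snd p, - w * fst p)
  end.

Lemma wave_Derive_n w a A B j x :
  Derive_n (wave w a A B) j x = wave w a (fst (wave_coef w j A B)) (snd (wave_coef w j A B)) x.
Proof.
  revert x. induction j as [|j IH]; intro x; [reflexivity|].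
  simpl Derive_n. rewrite (Derive_ext _ _ x IH).
  apply is_derive_unique. apply wave_derive.
Qed.

Lemma wave_ex_derive_n w a A B j x : ex_derive_n (wave w a A B) j x.
Proof.
  destruct j; [exact I|]. simpl ex_derive_n.
  apply (ex_derive_ext (wave w a (fst (wave_coef w j A B)) (snd (wave_coef w j A B)))).
  - intro t; symmetry; apply wave_Derive_n.
  - eexists; apply wave_derive.
Qed.

Lemma wave_continuous w a A B x : continuous (wave w a A B) x.
Proof. apply (ex_derive_continuous (V := R_NormedModule)). eexists; apply wave_derive. Qed.

Lemma glued_continuous (u f g : R -> R) x d : 0 < d ->
  (forall y, 0 <= y <= 1 -> x - d < y <= x -> u y = f y) ->
  (forall y, 0 <= y <= 1 -> x <= y < x + d -> u y = g y) ->
  continuous f x -> continuous g x -> f x = u x -> g x = u x ->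
  filterlim u (within (fun y => 0 <= y <= 1) (locally x)) (locally (u x)).
Proof.
  intros Hd Hf Hg Cf Cg Ef Eg.
  apply filterlim_locally. intros eps.
  pose proof (proj1 (filterlim_locally _ _) Cf eps) as [d1 H1].
  pose proof (proj1 (filterlim_locally _ _) Cg eps) as [d2 H2].
  assert (Hm : 0 < Rmin d (Rmin d1 d2)).
  { pose proof (cond_pos d1); pose proof (cond_pos d2). repeat apply Rmin_glb_lt; lra. }
  exists (mkposreal _ Hm). intros y Hy Dy.
  pose proof (Rmin_l d (Rmin d1 d2)). pose proof (Rmin_r d (Rmin d1 d2)).
  pose proof (Rmin_l d1 d2). pose proof (Rmin_r d1 d2).
  assert (Hyd : Rabs (y - x) < d) by (change (Rabs (y - x) < Rmin d (Rmin d1 d2)) in Hy; lra).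
  apply Rabs_lt_between' in Hyd.
  destruct (Rle_dec y x) as [L|L].
  - rewrite (Hf y), <- Ef by (auto; lra). apply H1. eapply ball_le; [|exact Hy]. simpl; lra.
  - rewrite (Hg y), <- Eg by (auto; lra). apply H2. eapply ball_le; [|exact Hy]. simpl; lra.
Qed.

Lemma grid_left_cell n x : (0 < n)%nat -> 0 <= x <= 1 ->
  exists k d, (1 <= k <= n)%nat /\ 0 < d /\
    forall y, 0 <= y <= 1 -> x - d < y <= x -> xk n (k - 1) <= y <= xk n k.
Proof.
  intros Hn Hx. pose proof (mesh_pos n Hn) as Hh.
  destruct (grid_cover n x Hn Hx) as [k [Hk Hxk]].
  destruct (Req_dec x (xk n (k - 1))) as [E|E].
  - destruct (Nat.eq_dec k 1) as [->|K1].
    + exists 1%nat, (mesh n). simpl in E. rewrite xk_0 in E. split; [lia | split; [exact Hh |]].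
      intros y Hy Hxy. simpl. rewrite xk_0. split; [lra|]. pose proof (xk_lt n 1 Hn). simpl in *. lra.
    + exists (k - 1)%nat, (mesh n). split; [lia | split; [exact Hh |]].
      intros y Hy Hxy. pose proof (xk_step n (k - 1) Hn ltac:(lia)). lra.
  - exists k, (x - xk n (k - 1)). split; [lia | split; [lra |]].
    intros y Hy Hxy. lra.
Qed.

Lemma grid_right_cell n x : (0 < n)%nat -> 0 <= x <= 1 ->
  exists k d, (1 <= k <= n)%nat /\ 0 < d /\
    forall y, 0 <= y <= 1 -> x <= y < x + d -> xk n (k - 1) <= y <= xk n k.
Proof.
  intros Hn Hx. pose proof (mesh_pos n Hn) as Hh.
  destruct (grid_cover n x Hn Hx) as [k [Hk Hxk]].
  destruct (Req_dec x (xk n k)) as [E|E].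
  - destruct (Nat.eq_dec k n) as [->|Kn].
    + exists n, (mesh n). rewrite xk_n in E by auto. split; [lia | split; [exact Hh |]].
      intros y Hy Hxy. rewrite xk_n by auto. pose proof (xk_lt n n Hn ltac:(lia)).
      rewrite xk_n in * by auto. lra.
    + exists (S k), (mesh n). split; [lia | split; [exact Hh |]].
      intros y Hy Hxy. replace (S k - 1)%nat with k by lia.
      pose proof (xk_step_succ n k Hn). lra.
  - exists k, (xk n k - x). split; [lia | split; [lra |]].
    intros y Hy Hxy. lra.
Qed.

(* The candidate eigenfunction for the frequency w and the angle th = jπ/n:
   on the cell I_k, the wave of frequency w with node values sin((k-1)th) at
   x_{k-1} and sin(k th) at x_k. *)

Definition node_sample th k := sin (INR k * th).
Definition cell_slope n w th k :=
  (node_sample th k - node_sample th (k - 1) * cos (w * mesh n)) / sin (w * mesh n).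
Definition cell_wave n w th k := wave w (xk n (k - 1)) (node_sample th (k - 1)) (cell_slope n w th k).
(* cell_index n x = ⌊nx⌋ + 1 (up r is the least integer > r), so that x lies
   in the half-open cell [x_{k-1}, x_k) for k = cell_index n x. *)
Definition cell_index n x := Z.to_nat (up (x * INR n)).
Definition glued_wave n w th x := cell_wave n w th (cell_index n x) x.

Lemma up_nat r k : INR k - 1 <= r < INR k -> Z.to_nat (up r) = k.
Proof.
  intros H. rewrite <- (tech_up r (Z.of_nat k)); [apply Nat2Z.id | |];
    rewrite <- INR_IZR_INZ; lra.
Qed.

Lemma cell_wave_left n w th k : cell_wave n w th k (xk n (k - 1)) = node_sample th (k - 1).
Proof. unfold cell_wave, wave. rewrite Rminus_diag, Rmult_0_r, cos_0, sin_0. ring. Qed.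

Lemma cell_wave_right n w th k : (0 < n)%nat -> (1 <= k)%nat -> sin (w * mesh n) <> 0 ->
  cell_wave n w th k (xk n k) = node_sample th k.
Proof.
  intros Hn Hk Hs. unfold cell_wave, wave, cell_slope. rewrite (xk_step n k Hn Hk).
  field. auto.
Qed.

(* The glued wave coincides with the k-th cell wave on the closed cell I_k,
   the two neighbouring waves agreeing at the shared node. *)
Lemma glued_wave_on_cell n w th k x : (0 < n)%nat -> (1 <= k <= n)%nat ->
  sin (w * mesh n) <> 0 -> xk n (k - 1) <= x <= xk n k ->
  glued_wave n w th x = cell_wave n w th k x.
Proof.
  intros Hn Hk Hs Hx. unfold glued_wave. pose proof (lt_0_INR n Hn) as HnR.
  destruct (Req_dec x (xk n k)) as [E|E].
  - replace (cell_index n x) with (S k).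
    + rewrite E, cell_wave_right by (auto; lia).
      pose proof (cell_wave_left n w th (S k)) as L.
      replace (S k - 1)%nat with k in L by lia. exact L.
    + symmetry. unfold cell_index. apply up_nat. rewrite E. unfold xk. rewrite S_INR.
      replace (INR k / INR n * INR n) with (INR k) by (field; lra). lra.
  - replace (cell_index n x) with k; [reflexivity|].
    symmetry. unfold cell_index. apply up_nat. unfold xk in Hx, E.
    rewrite minus_INR in Hx by lia. simpl INR in Hx.
    assert (Hlow : (INR k - 1) / INR n <= x) by lra.
    assert (Hup : x < INR k / INR n) by lra.
    split.
    + apply (Rmult_le_compat_r (INR n)) in Hlow; [|lra].
      replace ((INR k - 1) / INR n * INR n) with (INR k - 1) in Hlow by (field; lra). lra.
    + apply (Rmult_lt_compat_r (INR n)) in Hup; [|lra].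
      replace (INR k / INR n * INR n) with (INR k) in Hup by (field; lra). lra.
Qed.

Lemma glued_wave_near n w th k x : (0 < n)%nat -> (1 <= k <= n)%nat ->
  sin (w * mesh n) <> 0 -> xk n (k - 1) < x < xk n k ->
  locally x (fun t => cell_wave n w th k t = glued_wave n w th t).
Proof.
  intros Hn Hk Hs Hx.
  assert (Hp : 0 < Rmin (x - xk n (k - 1)) (xk n k - x)) by (apply Rmin_glb_lt; lra).
  exists (mkposreal _ Hp). intros y Hy.
  change (Rabs (y - x) < Rmin (x - xk n (k - 1)) (xk n k - x)) in Hy.
  pose proof (Rmin_l (x - xk n (k - 1)) (xk n k - x)).
  pose proof (Rmin_r (x - xk n (k - 1)) (xk n k - x)).
  apply Rabs_lt_between' in Hy.
  symmetry. apply glued_wave_on_cell; auto. lra.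
Qed.

Lemma cell_wave_Derive n w th k x : Derive (cell_wave n w th k) x =
  wave w (xk n (k - 1)) (w * cell_slope n w th k) (- w * node_sample th (k - 1)) x.
Proof. apply is_derive_unique. apply wave_derive. Qed.

Lemma glued_wave_continuous n w th : (0 < n)%nat -> sin (w * mesh n) <> 0 ->
  cont_on_01 (glued_wave n w th).
Proof.
  intros Hn Hs x Hx.
  destruct (grid_left_cell n x Hn Hx) as [kl [dl [Hkl [Hdl Hl]]]].
  destruct (grid_right_cell n x Hn Hx) as [kr [dr [Hkr [Hdr Hr]]]].
  assert (Hd : 0 < Rmin dl dr) by (apply Rmin_glb_lt; lra).
  pose proof (Rmin_l dl dr). pose proof (Rmin_r dl dr).
  apply (glued_continuous _ (cell_wave n w th kl) (cell_wave n w th kr) x _ Hd);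
    try apply wave_continuous.
  - intros y Hy Hxy. apply glued_wave_on_cell, Hl; auto. lra.
  - intros y Hy Hxy. apply glued_wave_on_cell, Hr; auto. lra.
  - symmetry. apply glued_wave_on_cell, Hl; auto; lra.
  - symmetry. apply glued_wave_on_cell, Hr; auto; lra.
Qed.

Lemma cell_wave_Derive_continuous n w th k p : continuous (Derive (cell_wave n w th k)) p.
Proof.
  apply (continuous_ext (wave w (xk n (k - 1)) (w * cell_slope n w th k)
                              (- w * node_sample th (k - 1)))).
  - intro t; symmetry; apply cell_wave_Derive.
  - apply wave_continuous.
Qed.

Lemma glued_wave_Derive_left n w th k : (0 < n)%nat -> (1 <= k <= n)%nat ->
  sin (w * mesh n) <> 0 ->
  filterlim (Derive (glued_wave n w th)) (at_left (xk n k))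
            (locally (Derive (cell_wave n w th k) (xk n k))).
Proof.
  intros Hn Hk Hs. pose proof (mesh_pos n Hn) as Hh.
  assert (Hst : xk n k - xk n (k - 1) = mesh n) by (apply xk_step; lia).
  apply (filterlim_ext_loc (Derive (cell_wave n w th k))).
  - exists (mkposreal _ Hh). intros y Hy Hlt.
    change (Rabs (y - xk n k) < mesh n) in Hy. apply Rabs_lt_between' in Hy.
    apply Derive_ext_loc. apply glued_wave_near; auto. lra.
  - eapply filterlim_filter_le_1; [apply filter_le_within | apply cell_wave_Derive_continuous].
Qed.

Lemma glued_wave_Derive_right n w th k : (0 < n)%nat -> (k <= n - 1)%nat ->
  sin (w * mesh n) <> 0 ->
  filterlim (Derive (glued_wave n w th)) (at_right (xk n k))
            (locally (Derive (cell_wave n w th (S k)) (xk n k))).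
Proof.
  intros Hn Hk Hs. pose proof (mesh_pos n Hn) as Hh.
  pose proof (xk_step_succ n k Hn) as Hst.
  apply (filterlim_ext_loc (Derive (cell_wave n w th (S k)))).
  - exists (mkposreal _ Hh). intros y Hy Hlt.
    change (Rabs (y - xk n k) < mesh n) in Hy. apply Rabs_lt_between' in Hy.
    apply Derive_ext_loc. apply glued_wave_near; auto; [lia |].
    replace (S k - 1)%nat with k by lia. lra.
  - eapply filterlim_filter_le_1; [apply filter_le_within | apply cell_wave_Derive_continuous].
Qed.

Lemma node_sample_recurrence th k : (1 <= k)%nat ->
  node_sample th (S k) = 2 * cos th * node_sample th k - node_sample th (k - 1).
Proof.
  intros Hk. unfold node_sample.
  replace (INR (S k) * th) with (INR k * th + th) by (rewrite S_INR; ring).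
  replace (INR (k - 1) * th) with (INR k * th - th) by (rewrite minus_INR by lia; simpl; ring).
  rewrite sin_plus, sin_minus. ring.
Qed.

(* The jump of the derivative at x_k is σ u(x_k) exactly because the
   half-trace equals cos th. *)
Lemma glued_wave_jump n sigma w th : (0 < n)%nat -> 0 < w -> sin (w * mesh n) <> 0 ->
  half_trace_freq n sigma w = cos th ->
  forall k, (1 <= k <= n - 1)%nat ->
  exists dl dr : R,
    filterlim (Derive (glued_wave n w th)) (at_left (xk n k)) (locally dl) /\
    filterlim (Derive (glued_wave n w th)) (at_right (xk n k)) (locally dr) /\
    dr - dl = sigma * glued_wave n w th (xk n k).
Proof.
  intros Hn Hw Hs Hg k Hk.
  assert (Hst : xk n k - xk n (k - 1) = mesh n) by (apply xk_step; lia).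
  pose proof (xk_lt n k Hn ltac:(lia)).
  exists (Derive (cell_wave n w th k) (xk n k)), (Derive (cell_wave n w th (S k)) (xk n k)).
  split; [apply glued_wave_Derive_left; auto; lia|].
  split; [apply glued_wave_Derive_right; auto; lia|].
  rewrite !cell_wave_Derive.
  rewrite (glued_wave_on_cell n w th k) by (auto; lia || lra).
  rewrite cell_wave_right by (auto; lia).
  unfold wave, cell_slope. replace (S k - 1)%nat with k by lia.
  rewrite Hst, Rminus_diag, Rmult_0_r, cos_0, sin_0.
  rewrite node_sample_recurrence, <- Hg by lia. unfold half_trace_freq.
  pose proof (sin2_cos2 (w * mesh n)) as SC. unfold Rsqr in SC.
  set (s := sin (w * mesh n)) in *. set (cs := cos (w * mesh n)) in *.
  field_simplify; try lra.
  transitivity ((w * node_sample th (k - 1) * (cs * cs + s * s - 1)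
                 + sigma * s * node_sample th k) / s); [field; lra|].
  replace (cs * cs + s * s - 1) with 0 by lra. field. lra.
Qed.

Lemma glued_wave_eigenfunction n sigma j w : (0 < n)%nat -> (1 <= j <= n - 1)%nat ->
  0 < w -> w * mesh n < PI -> half_trace_freq n sigma w = cos (INR j * PI / INR n) ->
  is_eigenfunction n sigma (w ^ 2) (glued_wave n w (INR j * PI / INR n)).
Proof.
  intros Hn Hj Hw HwP Hg.
  pose proof (mesh_pos n Hn) as Hh. pose proof (lt_0_INR n Hn). pose proof PI_RGT_0.
  set (th := INR j * PI / INR n) in *.
  assert (Hth : 0 < th < PI) by (apply index_angle_range; auto).
  assert (Hs : 0 < sin (w * mesh n)) by (apply sin_gt_0; nra).
  assert (Hs0 : sin (w * mesh n) <> 0) by lra.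
  assert (Hx1 : 0 <= xk n 1 <= 1) by (apply xk_bounds; lia).
  split; [|split; [|split; [|split; [|split]]]].
  - exists (xk n 1). split; auto.
    pose proof (xk_lt n 1 Hn ltac:(lia)).
    rewrite (glued_wave_on_cell n w th 1) by (auto; lia || lra).
    rewrite cell_wave_right by (auto; lia). unfold node_sample.
    rewrite Rmult_1_l. apply Rgt_not_eq, sin_gt_0; lra.
  - apply glued_wave_continuous; auto.
  - intros k Hk x Hx. pose proof (glued_wave_near n w th k x Hn Hk Hs0 Hx) as L.
    split.
    + intro m. apply (ex_derive_n_ext_loc _ _ m x L). apply wave_ex_derive_n.
    + rewrite <- (Derive_n_ext_loc _ _ 2 x L). unfold cell_wave. rewrite wave_Derive_n.
      rewrite (glued_wave_on_cell n w th k x) by (auto; lra). unfold cell_wave, wave.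
      simpl. ring.
  - rewrite (glued_wave_on_cell n w th 1 0) by (auto; try lia; simpl; rewrite xk_0; lra).
    pose proof (cell_wave_left n w th 1) as L. simpl in L. rewrite xk_0 in L.
    rewrite L. unfold node_sample. simpl. rewrite Rmult_0_l. apply sin_0.
  - rewrite (glued_wave_on_cell n w th n 1)
      by (auto; try lia; rewrite xk_n by auto; pose proof (xk_bounds n (n - 1) Hn ltac:(lia)); lra).
    rewrite <- (xk_n n Hn), cell_wave_right by (auto; lia). unfold node_sample.
    apply sin_eq_0_1. exists (Z.of_nat j). rewrite <- INR_IZR_INZ. unfold th. field. lra.
  - apply glued_wave_jump; auto.
Qed.

Lemma eigenvalue_for_index n sigma j : (0 < n)%nat -> 0 <= sigma -> (1 <= j <= n - 1)%nat ->
  exists mu, 0 < mu < INR n ^ 2 * PI ^ 2 /\ is_eigenvalue n sigma mu /\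
    half_trace n sigma mu = cos (INR j * PI / INR n).
Proof.
  intros Hn Hs Hj.
  destruct (half_trace_freq_hits n sigma j Hn Hs Hj) as [w [Hw [HwP Hg]]].
  pose proof (lt_0_INR n Hn). pose proof PI_RGT_0.
  assert (w < INR n * PI).
  { unfold mesh in HwP. apply Rmult_lt_reg_r with (1 / INR n); [apply Rdiv_lt_0_compat; lra|].
    replace (INR n * PI * (1 / INR n)) with PI by (field; lra). lra. }
  exists (w ^ 2). split; [split; nra | split].
  - eexists. apply glued_wave_eigenfunction; eauto.
  - rewrite half_trace_sqrt by nra. rewrite <- Rsqr_pow2, sqrt_Rsqr by lra. auto.
Qed.


(** * The Fourier coefficient on a cell *)

Lemma cos_nat_PI k : cos (INR k * PI) = (-1) ^ k.
Proof.
  induction k as [|k IH]; [simpl; rewrite Rmult_0_l; apply cos_0|].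
  rewrite S_INR. replace ((INR k + 1) * PI) with (INR k * PI + PI) by ring.
  rewrite neg_cos, IH. simpl. ring.
Qed.

Lemma sin_nat_PI k : sin (INR k * PI) = 0.
Proof. apply sin_eq_0_1. exists (Z.of_nat k). rewrite INR_IZR_INZ. reflexivity. Qed.

Lemma wave_sin_integral (w a b A B N : R) : 0 < w -> w ^ 2 <> N ^ 2 ->
  RInt (fun x => wave w a A B x * sin (N * x)) a b =
  ((wave w a A B b * N * cos (N * b) - wave w a (w * B) (- w * A) b * sin (N * b)) -
   (wave w a A B a * N * cos (N * a) - wave w a (w * B) (- w * A) a * sin (N * a)))
  / (w ^ 2 - N ^ 2).
Proof.
  intros Hw HN.
  assert (HN' : w ^ 2 - N ^ 2 <> 0) by (intro E; apply HN; lra).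
  set (G := fun x => (wave w a A B x * N * cos (N * x)
                      - wave w a (w * B) (- w * A) x * sin (N * x)) / (w ^ 2 - N ^ 2)).
  assert (Hi : is_RInt (fun x => wave w a A B x * sin (N * x)) a b (minus (G b) (G a))).
  { apply (is_RInt_derive G).
    - intros t _. unfold G, wave. auto_derive; auto. unfold Rminus. field. contradict HN'. lra.
    - intros t Ht. apply (ex_derive_continuous (V := R_NormedModule)). eexists.
      unfold wave. auto_derive; auto. }
  rewrite (is_RInt_unique _ _ _ _ Hi).
  unfold G, minus, plus, opp; simpl. field. contradict HN'. lra.
Qed.

Lemma nPI_xk n k : (0 < n)%nat -> INR n * PI * xk n k = INR k * PI.
Proof. intros Hn. unfold xk. pose proof (lt_0_INR n Hn). field. lra. Qed.

Lemma Fk_formula n sigma lam u k : (0 < n)%nat -> is_eigenfunction n sigma lam u ->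
  0 < lam -> lam <> INR n ^ 2 * PI ^ 2 -> (1 <= k <= n)%nat ->
  Fk n k u = INR n * PI * (-1) ^ (k + 1) * (u (xk n k) + u (xk n (k - 1)))
             / (INR n ^ 2 * PI ^ 2 - lam).
Proof.
  intros Hn He Hl HN Hk.
  destruct (eigenfunction_cell_form n sigma lam u k Hn He Hk) as [be [Hform Hend]].
  set (a := xk n (k - 1)) in *. set (b := xk n k) in *.
  assert (Hab : a < b) by (apply xk_lt; lia).
  assert (Hw : 0 < sqrt lam) by (apply sqrt_lt_R0; lra).
  set (w := sqrt lam) in *.
  assert (Ew : w ^ 2 = lam) by (unfold w; rewrite <- Rsqr_pow2; apply Rsqr_sqrt; lra).
  assert (Hwave : forall x, a < x < b -> u x = wave w a (u a) (be / w) x).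
  { intros x Hx. rewrite (proj1 (Hform x Hx)). unfold Cfun, Sfun, wave.
    destruct (Rlt_dec 0 lam); [|lra]. fold w. field. lra. }
  assert (Ea : wave w a (u a) (be / w) a = u a).
  { unfold wave. rewrite Rminus_diag, Rmult_0_r, cos_0, sin_0. ring. }
  assert (Eb : wave w a (u a) (be / w) b = u b).
  { rewrite Hend. unfold wave, Cfun, Sfun. destruct (Rlt_dec 0 lam); [|lra]. fold w.
    unfold b, a. rewrite (xk_step n k Hn ltac:(lia)). field. lra. }
  unfold Fk. fold a b.
  rewrite (RInt_ext _ (fun x => wave w a (u a) (be / w) x * sin (INR n * PI * x))).
  2:{ intros x Hx. rewrite Rmin_left, Rmax_right in Hx by lra. rewrite Hwave by auto. reflexivity. }
  rewrite wave_sin_integral; auto.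
  2:{ rewrite Ew. replace ((INR n * PI) ^ 2) with (INR n ^ 2 * PI ^ 2) by ring. auto. }
  unfold a, b. rewrite !nPI_xk, !sin_nat_PI, !cos_nat_PI by auto. fold a b.
  rewrite Ea, Eb, Ew.
  destruct k as [|k]; [lia|]. replace (S k - 1)%nat with k by lia.
  replace (S k + 1)%nat with (S (S k)) by lia.
  simpl pow. field. split; intro X; apply HN; lra.
Qed.


(** * Counting eigenvalues: λ_m(σ) has index m *)

Lemma cos_index_decreasing n j1 j2 : (0 < n)%nat -> (j1 < j2)%nat -> (j2 <= n)%nat ->
  cos (INR j2 * PI / INR n) < cos (INR j1 * PI / INR n).
Proof.
  intros Hn H12 H2. pose proof (lt_0_INR n Hn). pose proof PI_RGT_0.
  pose proof (lt_INR _ _ H12). pose proof (le_INR _ _ H2). pose proof (pos_INR j1).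
  apply cos_decreasing_1;
    solve [apply Rdiv_le_0_compat; nra
          | apply Rmult_le_reg_r with (INR n); auto; field_simplify; nra
          | apply Rmult_lt_reg_r with (INR n); auto; field_simplify; nra].
Qed.

Definition has_index n sigma mu j :=
  0 < mu < INR n ^ 2 * PI ^ 2 /\ half_trace n sigma mu = cos (INR j * PI / INR n).

Lemma index_order n sigma mu lam j' j : (0 < n)%nat -> 0 <= sigma ->
  (j' <= n)%nat -> (j <= n)%nat -> has_index n sigma mu j' -> has_index n sigma lam j ->
  mu < lam <-> (j' < j)%nat.
Proof.
  intros Hn Hs Hj' Hj [Hmu Cmu] [Hlam Clam]. split.
  - intros Hlt. pose proof (half_trace_decreasing n sigma mu lam Hn Hs ltac:(lra) Hlt ltac:(lra)).
    destruct (Nat.lt_ge_cases j' j) as [L|L]; auto. exfalso.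
    destruct (Nat.eq_dec j' j) as [->|E]; [lra|].
    pose proof (cos_index_decreasing n j j' Hn ltac:(lia) Hj'). lra.
  - intros Hlt. pose proof (cos_index_decreasing n j' j Hn Hlt Hj).
    destruct (Rtotal_order mu lam) as [L|[E|L]]; auto; exfalso.
    + subst. lra.
    + pose proof (half_trace_decreasing n sigma lam mu Hn Hs ltac:(lra) L ltac:(lra)). lra.
Qed.

Lemma eigenvalues_up_to n sigma J : (0 < n)%nat -> 0 <= sigma -> (J <= n - 1)%nat ->
  exists l, NoDup l /\ length l = J /\
   (forall mu, In mu l -> is_eigenvalue n sigma mu /\
        exists j, (1 <= j <= J)%nat /\ has_index n sigma mu j) /\
   (forall j, (1 <= j <= J)%nat -> exists mu, In mu l /\ has_index n sigma mu j).
Proof.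
  intros Hn Hs. induction J as [|J IH]; intros HJ.
  - exists nil. split; [apply NoDup_nil | split; [reflexivity | split; [intros mu [] | intros j Hj; lia]]].
  - destruct (IH ltac:(lia)) as [l [Hnd [Hlen [Hmem Hall]]]].
    destruct (eigenvalue_for_index n sigma (S J) Hn Hs ltac:(lia)) as [mu [Hmu [Hev Hc]]].
    exists (mu :: l). split; [|split; [|split]].
    + constructor; auto. intro Hin. destruct (Hmem mu Hin) as [_ [j [Hj [_ Hcj]]]].
      rewrite Hc in Hcj. pose proof (cos_index_decreasing n j (S J) Hn ltac:(lia) ltac:(lia)). lra.
    + simpl. lia.
    + intros mu' [<-|Hin].
      * split; auto. exists (S J). split; [lia | split; auto].
      * destruct (Hmem mu' Hin) as [Hev' [j [Hj Hidx]]].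
        split; auto. exists j. split; [lia | auto].
    + intros j Hj. destruct (Nat.eq_dec j (S J)) as [->|E].
      * exists mu. split; [left; auto | split; auto].
      * destruct (Hall j ltac:(lia)) as [mu' [Hin Hidx]]. exists mu'. split; [right |]; auto.
Qed.

(* λ_m(σ) lies below the threshold: otherwise the n-1 eigenvalues of
   eigenvalues_up_to would all be smaller. *)
Lemma mth_eigenvalue_below n sigma m lam : (2 <= n)%nat -> (1 <= m <= n - 1)%nat ->
  0 <= sigma -> is_mth_eigenvalue n sigma m lam -> lam < INR n ^ 2 * PI ^ 2.
Proof.
  intros Hn Hm Hs [_ [l [Hnd [Hlen Hl]]]].
  destruct (Rlt_dec lam (INR n ^ 2 * PI ^ 2)) as [L|L]; auto. exfalso.
  destruct (eigenvalues_up_to n sigma (n - 1) ltac:(lia) Hs ltac:(lia))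
    as [l' [Hnd' [Hlen' [Hmem _]]]].
  assert (Hincl : incl l' l).
  { intros mu Hin. apply Hl. destruct (Hmem mu Hin) as [Hev [j [_ [Hmu _]]]].
    split; auto. lra. }
  pose proof (NoDup_incl_length Hnd' Hincl). lia.
Qed.

Lemma mth_eigenvalue_index n sigma m lam : (2 <= n)%nat -> (1 <= m <= n - 1)%nat ->
  0 <= sigma -> is_mth_eigenvalue n sigma m lam -> has_index n sigma lam m.
Proof.
  intros Hn Hm Hs Hmth. pose proof (mth_eigenvalue_below n sigma m lam Hn Hm Hs Hmth) as HA.
  destruct Hmth as [[u Hu] [l [Hnd [Hlen Hl]]]].
  assert (Hn0 : (0 < n)%nat) by lia.
  destruct (eigen_below_threshold n sigma lam u Hn0 Hs Hu HA) as [Hpos [j [Hj Hcj]]].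
  assert (Hidx : has_index n sigma lam j) by (split; [split|]; auto).
  destruct (eigenvalues_up_to n sigma (j - 1) Hn0 Hs ltac:(lia))
    as [l' [Hnd' [Hlen' [Hmem Hall]]]].
  (* the j - 1 eigenvalues of index < j all lie below λ *)
  assert (Hle : (j - 1 <= m - 1)%nat).
  { assert (Hincl : incl l' l).
    { intros mu Hin. apply Hl. destruct (Hmem mu Hin) as [Hev [j' [Hj' Hidx']]].
      split; auto. apply (index_order n sigma mu lam j' j); auto; lia. }
    pose proof (NoDup_incl_length Hnd' Hincl). lia. }
  (* each eigenvalue below λ has an index < j, hence occurs in that list *)
  assert (Hge : (m - 1 <= j - 1)%nat).
  { assert (Hincl : incl l l').
    { intros mu Hin. destruct (proj1 (Hl mu) Hin) as [[v Hv] Hlt].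
      destruct (eigen_below_threshold n sigma mu v Hn0 Hs Hv ltac:(lra))
        as [Hmp [j' [Hj' Hc']]].
      assert (Hidx' : has_index n sigma mu j') by (split; [split; lra|]; auto).
      assert (Hj'j : (j' < j)%nat) by (apply (index_order n sigma mu lam j' j); auto; lia).
      destruct (Hall j' ltac:(lia)) as [mu' [Hin' Hidx'']].
      replace mu with mu'; auto.
      destruct (Rtotal_order mu mu') as [L|[E|L]]; auto; exfalso.
      - apply (index_order n sigma mu mu' j' j') in L; auto; lia.
      - apply (index_order n sigma mu' mu j' j') in L; auto; lia. }
    pose proof (NoDup_incl_length Hnd Hincl). lia. }
  replace m with j by lia. exact Hidx.
Qed.

Lemma mth_eigenfunction_nodes n sigma m lam u : (2 <= n)%nat -> (1 <= m <= n - 1)%nat ->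
  0 <= sigma -> is_mth_eigenvalue n sigma m lam -> is_eigenfunction n sigma lam u ->
  has_index n sigma lam m /\ u (xk n 1) <> 0 /\
  forall k, (k <= n)%nat -> u (xk n k) = u (xk n 1) * cheb (cos (INR m * PI / INR n)) k.
Proof.
  intros Hn Hm Hs Hmth He.
  pose proof (mth_eigenvalue_index n sigma m lam Hn Hm Hs Hmth) as Hidx.
  destruct Hidx as [[Hp HA] Hc].
  destruct (eigen_node_values n sigma lam u ltac:(lia) He HA) as [U1 [_ Hnodes]].
  rewrite Hc in Hnodes. repeat split; auto.
Qed.

Lemma F1_formula n sigma lam u : (0 < n)%nat -> is_eigenfunction n sigma lam u ->
  0 < lam -> lam <> INR n ^ 2 * PI ^ 2 ->
  Fk n 1 u = INR n * PI * u (xk n 1) / (INR n ^ 2 * PI ^ 2 - lam).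
Proof.
  intros Hn He Hp HN. rewrite (Fk_formula n sigma lam u 1 Hn He Hp HN ltac:(lia)).
  simpl Nat.sub. rewrite xk_0. destruct He as [_ [_ [_ [H0 _]]]]. rewrite H0.
  simpl pow. unfold Rdiv. ring.
Qed.

Lemma Fk_ratio n m sigma lam u k : (2 <= n)%nat -> (1 <= m <= n - 1)%nat -> 0 <= sigma ->
  is_mth_eigenvalue n sigma m lam -> is_eigenfunction n sigma lam u -> (1 <= k <= n)%nat ->
  Fk n k u = Fk n 1 u * ((-1) ^ (k + 1) *
     (cheb (cos (INR m * PI / INR n)) k + cheb (cos (INR m * PI / INR n)) (k - 1))).
Proof.
  intros Hn Hm Hs Hmth He Hk.
  destruct (mth_eigenfunction_nodes n sigma m lam u Hn Hm Hs Hmth He)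
    as [[[Hp HA] _] [_ Hnodes]].
  assert (HN : INR n ^ 2 * PI ^ 2 - lam <> 0) by lra.
  rewrite (Fk_formula n sigma lam u k ltac:(lia) He Hp ltac:(lra) Hk).
  rewrite (F1_formula n sigma lam u ltac:(lia) He Hp ltac:(lra)).
  rewrite (Hnodes k), (Hnodes (k - 1)%nat) by lia.
  field. contradict HN. lra.
Qed.

Theorem corollary1p3 (n m : nat) (Hn : (2 <= n)%nat) (Hm : (1 <= m <= n - 1)%nat) :
  (forall (sigma lam : R) (u : R -> R),
     0 <= sigma -> is_mth_eigenvalue n sigma m lam -> is_eigenfunction n sigma lam u ->
     forall k : nat, (1 <= k <= n)%nat ->
       Fk n k u = INR n * PI * (-1) ^ (k + 1) * (u (xk n k) + u (xk n (k - 1)))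
                  / (INR n ^ 2 * PI ^ 2 - lam)) /\
  (forall (sigma lam : R) (u : R -> R),
     0 <= sigma -> is_mth_eigenvalue n sigma m lam -> is_eigenfunction n sigma lam u ->
     Fk n 1 u <> 0) /\
  (forall (sigma1 sigma2 lam1 lam2 : R) (u1 u2 : R -> R),
     0 <= sigma1 -> 0 <= sigma2 ->
     is_mth_eigenvalue n sigma1 m lam1 -> is_eigenfunction n sigma1 lam1 u1 ->
     is_mth_eigenvalue n sigma2 m lam2 -> is_eigenfunction n sigma2 lam2 u2 ->
     Fk n 1 u1 = 1 -> Fk n 1 u2 = 1 ->
     forall k : nat, (1 <= k <= n)%nat -> Fk n k u1 = Fk n k u2).
Proof.
  assert (Hn0 : (0 < n)%nat) by lia.
  pose proof (lt_0_INR n Hn0). pose proof PI_RGT_0.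
  split; [|split].
  - intros sigma lam u Hs Hmth He k Hk.
    destruct (mth_eigenvalue_index n sigma m lam Hn Hm Hs Hmth) as [[Hp HA] _].
    apply (Fk_formula n sigma lam u k Hn0 He Hp ltac:(lra) Hk).
  - intros sigma lam u Hs Hmth He.
    destruct (mth_eigenfunction_nodes n sigma m lam u Hn Hm Hs Hmth He)
      as [[[Hp HA] _] [U1 _]].
    rewrite (F1_formula n sigma lam u Hn0 He Hp ltac:(lra)).
    apply Rmult_integral_contrapositive_currified;
      [apply Rmult_integral_contrapositive_currified; [nra | exact U1] |].
    apply Rinv_neq_0_compat. lra.
  - intros s1 s2 l1 l2 u1 u2 Hs1 Hs2 M1 E1 M2 E2 F1 F2 k Hk.
    rewrite (Fk_ratio n m s1 l1 u1 k), (Fk_ratio n m s2 l2 u2 k), F1, F2 by auto.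
    reflexivity.
Qed.
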